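(* Suppose Assumptions 1–4 hold and $p$ is convex. Let $\mathbf{x}$ be a Cournot candidate and $\mathbf{x}^S$ a social optimum with $p(X)\neq p(X^S)$ (so $X<X^S$ and $p$ is differentiable at $X$), and let $c=|p'(X)|$. Define $$p^0(q)=\begin{cases}-c(q-X)+p(X), & 0\le q\le X,\\ \max\left\{0,\ \dfrac{p(X^S)-p(X)}{X^S-X}(q-X)+p(X)\right\}, & q>X.\end{cases}$$ Consider the modified model with inverse demand $p^0$ and the same cost functions. Then $\mathbf{x}^S$ is socially optimal in the modified model, and the efficiency $\gamma^0(\mathbf{x})$ of $\mathbf{x}$ in the modified model satisfies $\gamma^0(\mathbf{x})\le\gamma(\mathbf{x})$.
   Context: Cournot model: $N$ suppliers, inverse demand $p:[0,\infty)\to[0,\infty)$, supplier $n$ has cost $C_n:[0,\infty)\to[0,\infty)$ and chooses $x_n\ge0$; $X=\sum_n x_n$, $X^S=\sum_n x_n^S$. $\partial_\pm$ denote right/left derivatives; $C_n'(0)$ is the right derivative at $0$. Assumption 1: each $C_n$ is convex, continuous, nondecreasing on $[0,\infty)$, continuously differentiable on $(0,\infty)$, with $C_n(0)=0$. Assumption 2: $p$ is continuous, nonnegative, nonincreasing, $p(0)>0$; its right derivative at $0$ exists and at every $q>0$ its left and right derivatives exist. Assumption 3: there exists $R>0$ such that $p(R)\le\min_n C_n'(0)$. Assumption 4: $p(0)>\min_n C_n'(0)$. Social welfare of $\mathbf{x}\ge0$ under inverse demand $\tilde p$: $\int_0^X \tilde p(q)\,dq-\sum_{n=1}^N C_n(x_n)$;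 a social optimum maximizes it over nonnegative vectors. Efficiency of $\mathbf{x}$: its welfare divided by the optimal welfare (for the respective model). A nonnegative vector $\mathbf{x}$ is a Cournot candidate if for every $n$: $C_n'(x_n)\le p(X)+x_n\,\partial_-p(X)$ whenever $x_n>0$, and $C_n'(x_n)\ge p(X)+x_n\,\partial_+p(X)$. *)

From Stdlib Require Import Reals Lra ClassicalEpsilon.
Open Scope R_scope.

Fixpoint sumN (N : nat) (f : nat -> R) : R :=
  match N with
  | O => 0
  | S n => sumN n f + f n
  end.

(* Riemann integral of f over [a,b] (value of RiemannInt when f is integrable;
   an unspecified real otherwise). *)
Definition integral (f : R -> R) (a b : R) : R :=
  epsilon (inhabits 0)
    (fun l => exists pr : Riemann_integrable f a b, RiemannInt pr = l).

Definition right_deriv (f : R -> R) (x l : R) : Prop :=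
  forall eps, 0 < eps -> exists delta, 0 < delta /\
    forall h, 0 < h < delta -> Rabs ((f (x + h) - f x) / h - l) < eps.

Definition left_deriv (f : R -> R) (x l : R) : Prop :=
  forall eps, 0 < eps -> exists delta, 0 < delta /\
    forall h, 0 < h < delta -> Rabs ((f (x - h) - f x) / (- h) - l) < eps.

Definition cont_nonneg (f : R -> R) : Prop :=
  forall x, 0 <= x -> forall eps, 0 < eps -> exists delta, 0 < delta /\
    forall y, 0 <= y -> Rabs (y - x) < delta -> Rabs (f y - f x) < eps.

Definition convex_nonneg (f : R -> R) : Prop :=
  forall a b t, 0 <= a -> 0 <= b -> 0 <= t <= 1 ->
    f (t * a + (1 - t) * b) <= t * f a + (1 - t) * f b.

Definition nondecr_nonneg (f : R -> R) : Prop :=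
  forall a b, 0 <= a -> a <= b -> f a <= f b.

Definition nonincr_nonneg (f : R -> R) : Prop :=
  forall a b, 0 <= a -> a <= b -> f b <= f a.

Definition assumption1 (N : nat) (C dC : nat -> R -> R) : Prop :=
  forall n, (n < N)%nat ->
    convex_nonneg (C n) /\ cont_nonneg (C n) /\ nondecr_nonneg (C n) /\
    (forall x, 0 < x -> derivable_pt_lim (C n) x (dC n x)) /\
    (forall x, 0 < x -> continuity_pt (dC n) x) /\
    right_deriv (C n) 0 (dC n 0) /\
    C n 0 = 0.

(* Assumption 2; dpp q = right derivative of p at q >= 0,
   dpm q = left derivative of p at q > 0. *)
Definition assumption2 (p dpm dpp : R -> R) : Prop :=
  cont_nonneg p /\ (forall q, 0 <= q -> 0 <= p q) /\ nonincr_nonneg p /\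
  0 < p 0 /\
  (forall q, 0 <= q -> right_deriv p q (dpp q)) /\
  (forall q, 0 < q -> left_deriv p q (dpm q)).

Definition assumption3 (N : nat) (dC : nat -> R -> R) (p : R -> R) : Prop :=
  exists Rb, 0 < Rb /\ forall n, (n < N)%nat -> p Rb <= dC n 0.

Definition assumption4 (N : nat) (dC : nat -> R -> R) (p : R -> R) : Prop :=
  exists n, (n < N)%nat /\ dC n 0 < p 0.

Definition nonneg_vec (N : nat) (x : nat -> R) : Prop :=
  forall n, (n < N)%nat -> 0 <= x n.

Definition welfare (p : R -> R) (N : nat) (C : nat -> R -> R) (x : nat -> R) : R :=
  integral p 0 (sumN N x) - sumN N (fun n => C n (x n)).

Definition social_optimum (p : R -> R) (N : nat) (C : nat -> R -> R)
  (xS : nat -> R) : Prop :=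
  nonneg_vec N xS /\
  forall y, nonneg_vec N y -> welfare p N C y <= welfare p N C xS.

(* efficiency of x relative to a social optimum xS (optimal welfare = welfare of xS) *)
Definition efficiency (p : R -> R) (N : nat) (C : nat -> R -> R) (x xS : nat -> R) : R :=
  welfare p N C x / welfare p N C xS.

Definition cournot_candidate (p dpm dpp : R -> R) (N : nat) (dC : nat -> R -> R)
  (x : nat -> R) : Prop :=
  nonneg_vec N x /\
  forall n, (n < N)%nat ->
    (0 < x n -> dC n (x n) <= p (sumN N x) + x n * dpm (sumN N x)) /\
    p (sumN N x) + x n * dpp (sumN N x) <= dC n (x n).

Definition p0 (p : R -> R) (X XS c : R) (q : R) : R :=
  if Rle_dec q X then - c * (q - X) + p X
  else Rmax 0 ((p XS - p X) / (XS - X) * (q - X) + p X).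

From Stdlib Require Import Reals Lra Lia ClassicalEpsilon.
Open Scope R_scope.

(* The argument:
   - Optimality of xS for p yields the KKT conditions at price p(XS): every
     marginal cost is >= p(XS), with equality for active suppliers (obtained by
     unilateral deviations, using the continuity of p).
   - Conversely, with convex costs these conditions make xS optimal for any
     integrable demand that is >= p(XS) on [0,XS] and <= p(XS) beyond XS;
     p0 is such a demand, so xS is optimal in the modified model.
   - At a Cournot candidate active marginal costs are <= p(X); with the KKT
     conditions and monotone marginal costs this forces X < XS when
     p(X) <> p(XS), and it gives nonnegative welfare for x.
   - By convexity p0 <= p on [0,X] (tangent) and p0 >= p on [X,XS] (chord), so
     the modified model loses the same amount A >= 0 on both welfares and gains
     B >= 0 on the optimal one, which can only decrease the ratio. *)

Lemma integral_eq f a b (pr : Riemann_integrable f a b) :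
  integral f a b = RiemannInt pr.
Proof.
  unfold integral.
  destruct (epsilon_spec (inhabits 0)
    (fun l => exists pr : Riemann_integrable f a b, RiemannInt pr = l)
    (ex_intro _ _ (ex_intro _ pr eq_refl))) as [pr' H].
  rewrite <- H. apply RiemannInt_P5.
Qed.

Definition integrable_nonneg (f : R -> R) : Type :=
  forall a b, 0 <= a -> a <= b -> Riemann_integrable f a b.

Lemma integral_zero f : integral f 0 0 = 0.
Proof. rewrite (integral_eq _ _ _ (RiemannInt_P7 f 0)). apply RiemannInt_P9. Qed.

Lemma integral_split f a b (Hf : integrable_nonneg f) (ha : 0 <= a) (hab : a <= b) :
  integral f 0 b - integral f 0 a = RiemannInt (Hf a b ha hab).
Proof.
  pose proof (Hf 0 b (Rle_refl 0) (Rle_trans _ _ _ ha hab)) as H0b.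
  pose proof (Hf 0 a (Rle_refl 0) ha) as H0a.
  rewrite (integral_eq _ _ _ H0b), (integral_eq _ _ _ H0a).
  rewrite <- (RiemannInt_P26 H0a (Hf a b ha hab) H0b). ring.
Qed.

Lemma integral_mono f g a b : integrable_nonneg f -> integrable_nonneg g ->
  0 <= a -> a <= b -> (forall q, a < q < b -> f q <= g q) ->
  integral f 0 b - integral f 0 a <= integral g 0 b - integral g 0 a.
Proof.
  intros Hf Hg ha hab hfg. rewrite (integral_split f a b Hf ha hab), (integral_split g a b Hg ha hab).
  apply RiemannInt_P19; auto.
Qed.

Lemma integral_lower_bound f a b l : integrable_nonneg f -> 0 <= a -> a <= b ->
  (forall q, a < q < b -> l <= f q) -> l * (b - a) <= integral f 0 b - integral f 0 a.
Proof.
  intros Hf ha hab hf. rewrite (integral_split f a b Hf ha hab).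
  rewrite <- (RiemannInt_P15 (RiemannInt_P14 a b l)). apply RiemannInt_P19; auto.
Qed.

Lemma integral_upper_bound f a b u : integrable_nonneg f -> 0 <= a -> a <= b ->
  (forall q, a < q < b -> f q <= u) -> integral f 0 b - integral f 0 a <= u * (b - a).
Proof.
  intros Hf ha hab hf. rewrite (integral_split f a b Hf ha hab).
  rewrite <- (RiemannInt_P15 (RiemannInt_P14 a b u)). apply RiemannInt_P19; auto.
Qed.

Lemma lipschitz_continuity_pt g x K : 0 <= K ->
  (forall y, Rabs (g y - g x) <= K * Rabs (y - x)) -> continuity_pt g x.
Proof.
  intros hK hg. unfold continuity_pt, continue_in, limit1_in, limit_in; simpl; unfold R_dist.
  intros eps heps. exists (eps / (K + 1)). split.
  - apply Rdiv_lt_0_compat; lra.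
  - intros y [_ hy]. eapply Rle_lt_trans; [apply hg|].
    assert (K * Rabs (y - x) <= K * (eps / (K + 1))) by (apply Rmult_le_compat_l; lra).
    assert (K * (eps / (K + 1)) < eps).
    { apply Rmult_lt_reg_r with (K + 1); [lra|]. field_simplify; nra. }
    lra.
Qed.

Lemma Rmax0_lipschitz a b : Rabs (Rmax 0 a - Rmax 0 b) <= Rabs (a - b).
Proof.
  unfold Rmax; destruct (Rle_dec 0 a); destruct (Rle_dec 0 b);
  unfold Rabs; repeat destruct Rcase_abs; lra.
Qed.

(* A function continuous on [0,oo) is integrable there: compose with the clamp [Rmax 0]. *)
Lemma cont_nonneg_integrable f : cont_nonneg f -> integrable_nonneg f.
Proof.
  intros hf a b ha hab.
  apply Riemann_integrable_ext with (fun y => f (Rmax 0 y)).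
  { intros y hy. rewrite Rmin_left in hy by lra. rewrite Rmax_right by lra. reflexivity. }
  apply continuity_implies_RiemannInt; auto.
  intros x hx. unfold continuity_pt, continue_in, limit1_in, limit_in; simpl; unfold R_dist.
  intros eps heps. destruct (hf x ltac:(lra) eps heps) as [d [hd H]].
  exists d. split; auto. intros y [_ hy].
  rewrite (Rmax_right 0 x) by lra.
  apply H; [apply Rmax_l|]. eapply Rle_lt_trans; [|exact hy].
  replace x with (Rmax 0 x) at 1 by (apply Rmax_right; lra). apply Rmax0_lipschitz.
Qed.

Lemma piecewise_continuous_integrable f g1 g2 X : 0 <= X ->
  (forall q, q <= X -> f q = g1 q) -> (forall q, X <= q -> f q = g2 q) ->
  (forall q, continuity_pt g1 q) -> (forall q, continuity_pt g2 q) ->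
  integrable_nonneg f.
Proof.
  intros hX h1 h2 c1 c2.
  assert (i1 : forall a b, a <= b -> b <= X -> Riemann_integrable f a b).
  { intros a b hab hb. apply Riemann_integrable_ext with g1.
    - intros q hq. rewrite Rmin_left, Rmax_right in hq by lra. rewrite h1; lra.
    - apply continuity_implies_RiemannInt; auto. }
  assert (i2 : forall a b, a <= b -> X <= a -> Riemann_integrable f a b).
  { intros a b hab ha. apply Riemann_integrable_ext with g2.
    - intros q hq. rewrite Rmin_left, Rmax_right in hq by lra. rewrite h2; lra.
    - apply continuity_implies_RiemannInt; auto. }
  intros a b ha hab. destruct (Rle_dec b X); [apply i1; auto|].
  destruct (Rle_dec X a); [apply i2; auto|].
  apply RiemannInt_P24 with X; [apply i1 | apply i2]; lra.
Qed.

Lemma convex_three_point f u v w : convex_nonneg f -> 0 <= u -> u < v -> v < w ->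
  (w - u) * f v <= (w - v) * f u + (v - u) * f w.
Proof.
  intros hf hu huv hvw.
  set (t := (w - v) / (w - u)).
  assert (ht : 0 <= t <= 1).
  { unfold t; split.
    - apply Rmult_le_pos; [lra | apply Rlt_le, Rinv_0_lt_compat; lra].
    - apply Rmult_le_reg_r with (w - u); [lra|]. field_simplify; lra. }
  pose proof (hf u w t hu ltac:(lra) ht) as H.
  replace (t * u + (1 - t) * w) with v in H by (unfold t; field; lra).
  replace ((w - v) * f u + (v - u) * f w) with ((w - u) * (t * f u + (1 - t) * f w))
    by (unfold t; field; lra).
  apply Rmult_le_compat_l; lra.
Qed.

Lemma right_limit_le g l K d0 :
  (forall eps, 0 < eps -> exists d, 0 < d /\ forall h, 0 < h < d -> Rabs (g h - l) < eps) ->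
  0 < d0 -> (forall h, 0 < h < d0 -> g h <= K) -> l <= K.
Proof.
  intros hlim hd0 hg. destruct (Rle_dec l K) as [|hn]; auto. exfalso.
  destruct (hlim (l - K) ltac:(lra)) as [d [hd H]].
  set (h := Rmin d d0 / 2).
  assert (0 < Rmin d d0) by (apply Rmin_glb_lt; lra).
  pose proof (Rmin_l d d0). pose proof (Rmin_r d d0).
  specialize (H h ltac:(unfold h; lra)). specialize (hg h ltac:(unfold h; lra)).
  apply Rabs_def2 in H. lra.
Qed.

Lemma right_limit_ge g l K d0 :
  (forall eps, 0 < eps -> exists d, 0 < d /\ forall h, 0 < h < d -> Rabs (g h - l) < eps) ->
  0 < d0 -> (forall h, 0 < h < d0 -> K <= g h) -> K <= l.
Proof.
  intros hlim hd0 hg.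
  enough (- l <= - K) by lra.
  apply (right_limit_le (fun h => - g h) (- l) (- K) d0); auto.
  - intros eps heps. destruct (hlim eps heps) as [d [hd H]]. exists d; split; auto.
    intros h hh. replace (- g h - - l) with (- (g h - l)) by ring. rewrite Rabs_Ropp. auto.
  - intros h hh. specialize (hg h hh). lra.
Qed.

Lemma derivable_right_deriv f x l : derivable_pt_lim f x l -> right_deriv f x l.
Proof.
  intros H eps heps. destruct (H eps heps) as [d Hd]. exists d. split; [apply cond_pos|].
  intros h hh. apply Hd; [lra|]. rewrite Rabs_right; lra.
Qed.

Lemma derivable_left_deriv f x l : derivable_pt_lim f x l -> left_deriv f x l.
Proof.
  intros H eps heps. destruct (H eps heps) as [d Hd]. exists d. split; [apply cond_pos|].
  intros h hh. replace (x - h) with (x + - h) by ring. apply Hd; [lra|].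
  rewrite Rabs_left; lra.
Qed.

Lemma convex_supporting_line f a l y : convex_nonneg f -> 0 <= a -> 0 <= y ->
  right_deriv f a l -> f a + l * (y - a) <= f y.
Proof.
  intros hf ha hy hd.
  destruct (Rtotal_order y a) as [hlt|[heq|hgt]].
  - assert (hK : (f a - f y) / (a - y) <= l).
    { apply (right_limit_ge _ l _ 1 hd); [lra|]. intros h hh.
      pose proof (convex_three_point f y a (a + h) hf hy hlt ltac:(lra)).
      apply Rmult_le_reg_r with (h * (a - y)); [nra|].
      replace ((f a - f y) / (a - y) * (h * (a - y))) with ((f a - f y) * h) by (field; lra).
      replace ((f (a + h) - f a) / h * (h * (a - y))) with ((f (a + h) - f a) * (a - y))
        by (field; lra).
      nra. }
    assert (f a - f y = (f a - f y) / (a - y) * (a - y)) by (field; lra). nra.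
  - subst. lra.
  - assert (hK : l <= (f y - f a) / (y - a)).
    { apply (right_limit_le _ l _ (y - a) hd); [lra|]. intros h hh.
      pose proof (convex_three_point f a (a + h) y hf ha ltac:(lra) ltac:(lra)).
      apply Rmult_le_reg_r with (h * (y - a)); [nra|].
      replace ((f y - f a) / (y - a) * (h * (y - a))) with ((f y - f a) * h) by (field; lra).
      replace ((f (a + h) - f a) / h * (h * (y - a))) with ((f (a + h) - f a) * (y - a))
        by (field; lra).
      nra. }
    assert (f y - f a = (f y - f a) / (y - a) * (y - a)) by (field; lra). nra.
Qed.

Lemma nonincr_right_deriv_nonpos f a l : nonincr_nonneg f -> 0 <= a ->
  right_deriv f a l -> l <= 0.
Proof.
  intros hf ha hd. apply (right_limit_le _ l 0 1 hd); [lra|]. intros h hh.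
  assert (f (a + h) <= f a) by (apply hf; lra).
  unfold Rdiv. assert (0 < / h) by (apply Rinv_0_lt_compat; lra). nra.
Qed.

Lemma nonincr_left_deriv_nonpos f a l : nonincr_nonneg f -> 0 < a ->
  left_deriv f a l -> l <= 0.
Proof.
  intros hf ha hd. apply (right_limit_le _ l 0 a hd ha). intros h hh.
  assert (f a <= f (a - h)) by (apply hf; lra).
  unfold Rdiv. rewrite Rinv_opp.
  assert (0 < / h) by (apply Rinv_0_lt_compat; lra). nra.
Qed.

Lemma sum_ext N f g : (forall k, (k < N)%nat -> f k = g k) -> sumN N f = sumN N g.
Proof.
  induction N; simpl; intros H; auto.
  rewrite IHN by (intros; apply H; lia). rewrite H by lia. reflexivity.
Qed.

Lemma sum_le N f g : (forall k, (k < N)%nat -> f k <= g k) -> sumN N f <= sumN N g.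
Proof.
  induction N; simpl; intros H; [lra|].
  pose proof (IHN ltac:(intros; apply H; lia)). pose proof (H N ltac:(lia)). lra.
Qed.

Lemma sum_lin N f g a b :
  sumN N (fun k => a * f k + b * g k) = a * sumN N f + b * sumN N g.
Proof. induction N; simpl; [ring|]. rewrite IHN. ring. Qed.

Lemma sum_zero N : sumN N (fun _ => 0) = 0.
Proof. induction N; simpl; auto. rewrite IHN; ring. Qed.

Lemma sum_nonneg N f : (forall k, (k < N)%nat -> 0 <= f k) -> 0 <= sumN N f.
Proof. intros H. rewrite <- (sum_zero N). apply sum_le. auto. Qed.

Lemma sum_update N f g n : (n < N)%nat ->
  (forall k, (k < N)%nat -> k <> n -> g k = f k) -> sumN N g = sumN N f + (g n - f n).
Proof.
  induction N; simpl; intros hn H; [lia|].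
  destruct (Nat.eq_dec n N).
  - subst. rewrite (sum_ext N g f) by (intros; apply H; lia). ring.
  - rewrite IHN by (try lia; intros; apply H; lia). rewrite (H N) by lia. ring.
Qed.

Definition update (xS : nat -> R) (n : nat) (v : R) : nat -> R :=
  fun k => if Nat.eq_dec k n then v else xS k.

Lemma term_le_sum N f n : (forall k, (k < N)%nat -> 0 <= f k) -> (n < N)%nat ->
  f n <= sumN N f.
Proof.
  intros H hn.
  assert (hu : sumN N (update f n 0) = sumN N f + (0 - f n)).
  { rewrite (sum_update N f (update f n 0) n hn); unfold update.
    - destruct (Nat.eq_dec n n); [reflexivity | congruence].
    - intros k _ hkn. destruct (Nat.eq_dec k n); congruence. }
  assert (0 <= sumN N (update f n 0)).
  { apply sum_nonneg. intros k hk. unfold update. destruct (Nat.eq_dec k n); auto; lra. }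
  lra.
Qed.

Lemma sum_lt_exists N f g : sumN N f < sumN N g -> exists n, (n < N)%nat /\ f n < g n.
Proof.
  induction N; simpl; intros H; [lra|].
  destruct (Rlt_dec (f N) (g N)); [exists N; split; auto|].
  destruct IHN as [m [hm hf]]; [lra|]. exists m; split; auto.
Qed.

Lemma sum_scal N f a : sumN N (fun k => a * f k) = a * sumN N f.
Proof. induction N; simpl; [ring|]. rewrite IHN. ring. Qed.

Definition first_order_conditions (N : nat) (dC : nat -> R -> R) (xS : nat -> R)
  (pi : R) : Prop :=
  forall n, (n < N)%nat -> pi <= dC n (xS n) /\ (0 < xS n -> dC n (xS n) <= pi).

Section Costs.

Variables (N : nat) (C dC : nat -> R -> R).
Hypothesis HC : assumption1 N C dC.

Lemma cost_right_deriv n s : (n < N)%nat -> 0 <= s -> right_deriv (C n) s (dC n s).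
Proof.
  intros hn hs. destruct (HC n hn) as [_ [_ [_ [hd [_ [hr _]]]]]].
  destruct (Req_dec s 0) as [->|e]; auto. apply derivable_right_deriv, hd. lra.
Qed.

Lemma cost_supporting_line n s y : (n < N)%nat -> 0 <= s -> 0 <= y ->
  C n s + dC n s * (y - s) <= C n y.
Proof.
  intros hn hs hy. apply convex_supporting_line; auto.
  - apply (HC n hn).
  - apply cost_right_deriv; auto.
Qed.

Lemma marginal_cost_mono n s y : (n < N)%nat -> 0 <= s -> s <= y -> dC n s <= dC n y.
Proof.
  intros hn hs hsy.
  destruct (Req_dec s y) as [->|hne]; [lra|].
  pose proof (cost_supporting_line n s y hn hs ltac:(lra)).
  pose proof (cost_supporting_line n y s hn ltac:(lra) hs).
  nra.
Qed.

Lemma foc_cost_increase xS y pi : nonneg_vec N xS -> nonneg_vec N y ->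
  first_order_conditions N dC xS pi ->
  pi * (sumN N y - sumN N xS) <=
  sumN N (fun k => C k (y k)) - sumN N (fun k => C k (xS k)).
Proof.
  intros hxS hy hfoc.
  replace (pi * (sumN N y - sumN N xS)) with
    (pi * sumN N y + (- pi) * sumN N xS) by ring.
  replace (sumN N (fun k => C k (y k)) - sumN N (fun k => C k (xS k))) with
    (1 * sumN N (fun k => C k (y k)) + (-1) * sumN N (fun k => C k (xS k))) by ring.
  rewrite <- !sum_lin. apply sum_le. intros k hk.
  pose proof (cost_supporting_line k (xS k) (y k) hk (hxS k hk) (hy k hk)).
  pose proof (hy k hk). destruct (hfoc k hk) as [hlo hhi].
  destruct (Rle_lt_or_eq_dec 0 (xS k) (hxS k hk)) as [hpos|e].
  - specialize (hhi hpos). assert (dC k (xS k) = pi) by lra. nra.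
  - rewrite <- e in *. nra.
Qed.

End Costs.

Lemma foc_social_optimum N C dC P xS pi : assumption1 N C dC -> integrable_nonneg P ->
  nonneg_vec N xS -> first_order_conditions N dC xS pi ->
  (forall q, sumN N xS <= q -> P q <= pi) ->
  (forall q, 0 <= q <= sumN N xS -> pi <= P q) ->
  social_optimum P N C xS.
Proof.
  intros HC HP hxS hfoc hright hleft. split; auto. intros y hy. unfold welfare.
  pose proof (foc_cost_increase N C dC HC xS y pi hxS hy hfoc) as hcost.
  assert (hXS : 0 <= sumN N xS) by (apply sum_nonneg; auto).
  assert (hY : 0 <= sumN N y) by (apply sum_nonneg; auto).
  assert (integral P 0 (sumN N y) - integral P 0 (sumN N xS) <=
          pi * (sumN N y - sumN N xS)).
  { destruct (Rle_dec (sumN N xS) (sumN N y)).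
    - apply integral_upper_bound; auto. intros q hq; apply hright; lra.
    - pose proof (integral_lower_bound P (sumN N y) (sumN N xS) pi HP hY ltac:(lra)
        ltac:(intros q hq; apply hleft; lra)).
      lra. }
  lra.
Qed.

Lemma optimum_welfare_nonneg P N C xS : (forall n, (n < N)%nat -> C n 0 = 0) ->
  social_optimum P N C xS -> 0 <= welfare P N C xS.
Proof.
  intros hC0 [_ Hopt].
  specialize (Hopt (fun _ => 0) ltac:(intros k hk; lra)).
  unfold welfare at 1 in Hopt. rewrite sum_zero, integral_zero in Hopt.
  rewrite (sum_ext N (fun k => C k 0) (fun _ => 0)), sum_zero in Hopt by auto.
  lra.
Qed.

Section OptimalityConditions.

Variables (N : nat) (C dC : nat -> R -> R) (p : R -> R) (xS : nat -> R).
Hypothesis HC : assumption1 N C dC.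
Hypothesis Hpc : cont_nonneg p.
Hypothesis Hpd : nonincr_nonneg p.
Hypothesis Hopt : social_optimum p N C xS.

Lemma optimum_total_nonneg : 0 <= sumN N xS.
Proof. apply sum_nonneg, (proj1 Hopt). Qed.

Lemma unilateral_deviation n v : (n < N)%nat -> 0 <= v ->
  integral p 0 (sumN N xS + (v - xS n)) - C n v <=
  integral p 0 (sumN N xS) - C n (xS n).
Proof.
  intros hn hv. destruct Hopt as [hxS Hmax].
  assert (hy : nonneg_vec N (update xS n v)).
  { intros k hk. unfold update. destruct (Nat.eq_dec k n); auto. }
  assert (hnn : update xS n v n = v).
  { unfold update. destruct (Nat.eq_dec n n); congruence. }
  pose proof (Hmax _ hy) as Hw. unfold welfare in Hw.
  rewrite (sum_update N xS (update xS n v) n hn) in Hw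
    by (intros k _ hkn; unfold update; destruct (Nat.eq_dec k n); congruence).
  rewrite (sum_update N (fun k => C k (xS k)) (fun k => C k (update xS n v k)) n hn) in Hw
    by (intros k _ hkn; unfold update; destruct (Nat.eq_dec k n); congruence).
  rewrite hnn in Hw. lra.
Qed.

(* Raising output shows that no marginal cost is below the optimal price. *)
Lemma optimum_price_le_marginal n : (n < N)%nat -> p (sumN N xS) <= dC n (xS n).
Proof.
  intros hn. set (XS := sumN N xS). set (s := xS n).
  assert (hs : 0 <= s) by apply (proj1 Hopt n hn).
  assert (hXS : 0 <= XS) by apply optimum_total_nonneg.
  apply Rle_plus_epsilon. intros eps heps.
  destruct (Hpc XS hXS eps heps) as [d [hd Hd]].
  enough (p XS - eps <= dC n s) by lra.
  apply (right_limit_ge _ _ _ d (cost_right_deriv N C dC HC n s hn hs) hd).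
  intros h hh.
  assert (Hw : integral p 0 (XS + h) - C n (s + h) <= integral p 0 XS - C n s).
  { replace (XS + h) with (sumN N xS + (s + h - xS n)) by (unfold XS, s; ring).
    apply unilateral_deviation; auto; lra. }
  pose proof (integral_lower_bound p XS (XS + h) (p (XS + h))
    (cont_nonneg_integrable p Hpc) hXS ltac:(lra)
    ltac:(intros q hq; apply Hpd; lra)) as hI.
  specialize (Hd (XS + h) ltac:(lra)
    ltac:(replace (XS + h - XS) with h by ring; rewrite Rabs_right; lra)).
  apply Rabs_def2 in Hd.
  apply Rmult_le_reg_r with h; [lra|].
  replace ((C n (s + h) - C n s) / h * h) with (C n (s + h) - C n s) by (field; lra).
  nra.
Qed.

(* Lowering the output of an active supplier shows its marginal cost is at most
   the optimal price. *)
Lemma optimum_marginal_le_price n : (n < N)%nat -> 0 < xS n ->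
  dC n (xS n) <= p (sumN N xS).
Proof.
  intros hn hs. set (XS := sumN N xS). set (s := xS n).
  assert (hXS : 0 <= XS) by apply optimum_total_nonneg.
  assert (hsX : s <= XS) by (apply term_le_sum; auto; apply (proj1 Hopt)).
  destruct (HC n hn) as [_ [_ [_ [hder _]]]].
  apply Rle_plus_epsilon. intros eps heps.
  destruct (Hpc XS hXS eps heps) as [d [hd Hd]].
  assert (hm : 0 < Rmin d s) by (apply Rmin_glb_lt; auto).
  apply (right_limit_le _ _ _ (Rmin d s) (derivable_left_deriv _ _ _ (hder s hs)) hm).
  intros h hh. pose proof (Rmin_l d s). pose proof (Rmin_r d s).
  assert (Hw : integral p 0 (XS - h) - C n (s - h) <= integral p 0 XS - C n s).
  { replace (XS - h) with (sumN N xS + (s - h - xS n)) by (unfold XS, s; ring).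
    apply unilateral_deviation; auto; lra. }
  pose proof (integral_upper_bound p (XS - h) XS (p (XS - h))
    (cont_nonneg_integrable p Hpc) ltac:(lra) ltac:(lra)
    ltac:(intros q hq; apply Hpd; lra)) as hI.
  specialize (Hd (XS - h) ltac:(lra)
    ltac:(replace (XS - h - XS) with (- h) by ring; rewrite Rabs_left; lra)).
  apply Rabs_def2 in Hd.
  apply Rmult_le_reg_r with h; [lra|].
  replace ((C n (s - h) - C n s) / - h * h) with (C n s - C n (s - h)) by (field; lra).
  nra.
Qed.

Lemma optimum_foc : first_order_conditions N dC xS (p (sumN N xS)).
Proof.
  intros n hn. split.
  - apply optimum_price_le_marginal; auto.
  - apply optimum_marginal_le_price; auto.
Qed.

End OptimalityConditions.

Section CournotCandidate.

Variables (N : nat) (C dC : nat -> R -> R) (p dpm dpp : R -> R) (x : nat -> R).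
Hypothesis HC : assumption1 N C dC.
Hypothesis Hp : assumption2 p dpm dpp.
Hypothesis Hx : cournot_candidate p dpm dpp N dC x.

Lemma candidate_total_nonneg : 0 <= sumN N x.
Proof. apply sum_nonneg, (proj1 Hx). Qed.

(* Since p is nonincreasing, an active supplier's marginal cost is at most the price. *)
Lemma candidate_marginal_le_price n : (n < N)%nat -> 0 < x n ->
  dC n (x n) <= p (sumN N x).
Proof.
  intros hn hpos. destruct Hp as [_ [_ [Hpd [_ [_ Hdpm]]]]].
  assert (hX : x n <= sumN N x) by (apply term_le_sum; auto; apply (proj1 Hx)).
  pose proof (nonincr_left_deriv_nonpos p (sumN N x) _ Hpd ltac:(lra)
    (Hdpm (sumN N x) ltac:(lra))).
  destruct (proj2 Hx n hn) as [hle _]. specialize (hle hpos). nra.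
Qed.

(* Revenue covers cost for every supplier, so the candidate has nonnegative welfare. *)
Lemma candidate_welfare_nonneg : 0 <= welfare p N C x.
Proof.
  destruct Hp as [Hpc [_ [Hpd _]]]. pose proof candidate_total_nonneg as hX.
  unfold welfare.
  assert (hrev : p (sumN N x) * (sumN N x - 0) <= integral p 0 (sumN N x) - integral p 0 0).
  { apply integral_lower_bound; auto using cont_nonneg_integrable; [lra|].
    intros q hq; apply Hpd; lra. }
  rewrite integral_zero in hrev.
  assert (hcost : sumN N (fun k => C k (x k)) <= sumN N (fun k => p (sumN N x) * x k)).
  { apply sum_le. intros k hk. assert (hC0 : C k 0 = 0) by apply (HC k hk).
    destruct (Rle_lt_or_eq_dec 0 (x k) (proj1 Hx k hk)) as [hpos|e].
    - pose proof (cost_supporting_line N C dC HC k (x k) 0 hk ltac:(lra) ltac:(lra)).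
      pose proof (candidate_marginal_le_price k hk hpos). nra.
    - rewrite <- e, hC0. lra. }
  rewrite sum_scal in hcost. lra.
Qed.

(* If the candidate's price differs from the optimal one, the candidate
   under-supplies: otherwise some supplier produces more than at the optimum,
   and monotone marginal costs force p X = p XS. *)
Lemma candidate_below_optimum xS : social_optimum p N C xS ->
  p (sumN N x) <> p (sumN N xS) -> sumN N x < sumN N xS.
Proof.
  intros Hopt hne. destruct Hp as [Hpc [_ [Hpd _]]].
  destruct (Rtotal_order (sumN N x) (sumN N xS)) as [|[e|hgt]]; auto.
  - rewrite e in hne. congruence.
  - exfalso. destruct (sum_lt_exists N xS x hgt) as [n [hn hlt]].
    assert (hs : 0 <= xS n) by apply (proj1 Hopt n hn).
    pose proof (candidate_marginal_le_price n hn ltac:(lra)).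
    pose proof (marginal_cost_mono N C dC HC n (xS n) (x n) hn hs ltac:(lra)).
    pose proof (optimum_price_le_marginal N C dC p xS HC Hpc Hpd Hopt n hn).
    assert (p (sumN N x) <= p (sumN N xS))
      by (apply Hpd; [apply sum_nonneg, (proj1 Hopt) | lra]).
    apply hne; lra.
Qed.

End CournotCandidate.

Section ModifiedDemand.

(* The modified inverse demand p0 follows the tangent of p at X to the left of X
   and the (clamped) chord of p from X to XS to the right of X. *)
Variables (p : R -> R) (X XS c : R).
Hypothesis Hconv : convex_nonneg p.
Hypothesis Hpd : nonincr_nonneg p.
Hypothesis Hpnn : forall q, 0 <= q -> 0 <= p q.
Hypothesis HX : 0 <= X.
Hypothesis HXS : X < XS.
Hypothesis Hc : 0 <= c.
Hypothesis Htan : forall q, 0 <= q -> p X - c * (q - X) <= p q.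

Local Notation P0 := (p0 p X XS c).
Local Notation slope := ((p XS - p X) / (XS - X)).

Lemma p0_left q : q <= X -> P0 q = - c * (q - X) + p X.
Proof. intros hq. unfold p0. destruct (Rle_dec q X); [reflexivity | lra]. Qed.

Lemma p0_right q : X < q -> P0 q = Rmax 0 (slope * (q - X) + p X).
Proof. intros hq. unfold p0. destruct (Rle_dec q X); [lra | reflexivity]. Qed.

Lemma slope_chord : slope * (XS - X) = p XS - p X.
Proof. field. lra. Qed.

Lemma slope_nonpos : slope <= 0.
Proof.
  assert (p XS <= p X) by (apply Hpd; lra).
  unfold Rdiv. assert (0 < / (XS - X)) by (apply Rinv_0_lt_compat; lra). nra.
Qed.

Lemma p_below_chord q : X < q <= XS -> p q <= slope * (q - X) + p X.
Proof.
  intros hq. pose proof slope_chord.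
  destruct (Req_dec q XS) as [->|hne]; [lra|].
  pose proof (convex_three_point p X q XS Hconv HX ltac:(lra) ltac:(lra)).
  apply Rmult_le_reg_l with (XS - X); [lra|]. nra.
Qed.

Lemma p0_below_p q : 0 <= q <= X -> P0 q <= p q.
Proof. intros hq. rewrite p0_left by lra. pose proof (Htan q ltac:(lra)). lra. Qed.

Lemma p0_above_p q : X < q <= XS -> p q <= P0 q.
Proof.
  intros hq. rewrite p0_right by lra.
  eapply Rle_trans; [apply p_below_chord; auto | apply Rmax_r].
Qed.

Lemma p0_le_price q : XS <= q -> P0 q <= p XS.
Proof.
  intros hq. rewrite p0_right by lra. pose proof slope_chord. pose proof slope_nonpos.
  apply Rmax_lub; [apply Hpnn; lra | nra].
Qed.

Lemma p0_ge_price q : 0 <= q <= XS -> p XS <= P0 q.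
Proof.
  intros hq. destruct (Rle_dec q X).
  - rewrite p0_left by lra. assert (p XS <= p X) by (apply Hpd; lra). nra.
  - eapply Rle_trans; [|apply p0_above_p; lra]. apply Hpd; lra.
Qed.

(* Both pieces are Lipschitz and agree at X, so p0 is integrable. *)
Lemma p0_integrable : integrable_nonneg P0.
Proof.
  apply (piecewise_continuous_integrable P0 (fun q => - c * (q - X) + p X)
           (fun q => Rmax 0 (slope * (q - X) + p X)) X HX).
  - apply p0_left.
  - intros q hq. destruct (Req_dec q X) as [->|hne]; [|apply p0_right; lra].
    rewrite p0_left by lra. rewrite Rmax_right; [ring|].
    replace (slope * (X - X) + p X) with (p X) by ring. apply Hpnn; lra.
  - intros q. apply lipschitz_continuity_pt with c; auto. intros y.
    replace (- c * (y - X) + p X - (- c * (q - X) + p X)) with (- c * (y - q)) by ring.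
    rewrite Rabs_mult, Rabs_Ropp, (Rabs_right c) by lra. lra.
  - intros q. apply lipschitz_continuity_pt with (Rabs slope); [apply Rabs_pos|].
    intros y. eapply Rle_trans; [apply Rmax0_lipschitz|].
    replace (slope * (y - X) + p X - (slope * (q - X) + p X)) with (slope * (y - q)) by ring.
    rewrite Rabs_mult. lra.
Qed.

End ModifiedDemand.

(* Removing a loss A >= 0 from both welfares and adding a gain B >= 0 to the
   optimal one can only decrease the efficiency ratio (with x/0 = 0). *)
Lemma ratio_loss_gain_le Wx Ws A B : 0 <= Wx <= Ws -> 0 <= A -> 0 <= B ->
  0 <= Ws - A + B -> (Wx - A) / (Ws - A + B) <= Wx / Ws.
Proof.
  intros hW hA hB hD. unfold Rdiv.
  destruct (Req_dec Ws 0) as [h0|h0].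
  - assert (Wx = 0) by lra. subst. rewrite Rinv_0.
    destruct (Req_dec (0 - A + B) 0) as [e|e].
    + rewrite e, Rinv_0. lra.
    + assert (0 < / (0 - A + B)) by (apply Rinv_0_lt_compat; lra). nra.
  - destruct (Req_dec (Ws - A + B) 0) as [e|e].
    + rewrite e, Rinv_0. assert (0 < / Ws) by (apply Rinv_0_lt_compat; lra). nra.
    + apply Rmult_le_reg_r with ((Ws - A + B) * Ws); [nra|].
      replace ((Wx - A) * / (Ws - A + B) * ((Ws - A + B) * Ws)) with ((Wx - A) * Ws)
        by (field; lra).
      replace (Wx * / Ws * ((Ws - A + B) * Ws)) with (Wx * (Ws - A + B)) by (field; lra).
      nra.
Qed.

Lemma efficiency_comparison N C p P x xS : integrable_nonneg p -> integrable_nonneg P ->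
  0 <= sumN N x <= sumN N xS ->
  (forall q, 0 < q < sumN N x -> P q <= p q) ->
  (forall q, sumN N x < q < sumN N xS -> p q <= P q) ->
  0 <= welfare p N C x <= welfare p N C xS -> 0 <= welfare P N C xS ->
  efficiency P N C x xS <= efficiency p N C x xS.
Proof.
  intros Hp HP hX hbelow habove hW hW0.
  pose proof (integral_mono P p 0 (sumN N x) HP Hp ltac:(lra) ltac:(lra) hbelow) as hloss.
  pose proof (integral_mono p P (sumN N x) (sumN N xS) Hp HP ltac:(lra) ltac:(lra) habove)
    as hgain.
  rewrite !integral_zero in hloss.
  unfold efficiency. unfold welfare in *.
  set (A := integral p 0 (sumN N x) - integral P 0 (sumN N x)).
  set (B := (integral P 0 (sumN N xS) - integral P 0 (sumN N x)) -
            (integral p 0 (sumN N xS) - integral p 0 (sumN N x))).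
  replace (integral P 0 (sumN N x) - sumN N (fun n => C n (x n))) with
    ((integral p 0 (sumN N x) - sumN N (fun n => C n (x n))) - A) by (unfold A; ring).
  replace (integral P 0 (sumN N xS) - sumN N (fun n => C n (xS n))) with
    ((integral p 0 (sumN N xS) - sumN N (fun n => C n (xS n))) - A + B)
    by (unfold A, B; ring).
  apply ratio_loss_gain_le; unfold A, B in *; lra.
Qed.

Theorem proposition9 (N : nat) (C dC : nat -> R -> R) (p dpm dpp : R -> R)
  (x xS : nat -> R) :
  assumption1 N C dC ->
  assumption2 p dpm dpp ->
  assumption3 N dC p ->
  assumption4 N dC p ->
  convex_nonneg p ->
  cournot_candidate p dpm dpp N dC x ->
  social_optimum p N C xS ->
  p (sumN N x) <> p (sumN N xS) ->
  let X := sumN N x in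
  let XS := sumN N xS in
  let c := Rabs (dpp X) in
  social_optimum (p0 p X XS c) N C xS /\
  efficiency (p0 p X XS c) N C x xS <= efficiency p N C x xS.
Proof.
  intros HC Hp _ _ Hconv Hx Hopt Hne X XS c.
  pose proof Hp as [Hpc [Hpnn [Hpd [_ [Hdpp _]]]]].
  pose proof (candidate_total_nonneg N dC p dpm dpp x Hx) as HX.
  pose proof (candidate_below_optimum N C dC p dpm dpp x HC Hp Hx xS Hopt Hne) as HXS.
  (* c = |p'(X)| is the slope of the supporting line of p at X *)
  assert (Htan : forall q, 0 <= q -> p X - c * (q - X) <= p q).
  { intros q hq. pose proof (nonincr_right_deriv_nonpos p X _ Hpd HX (Hdpp X HX)).
    unfold c. rewrite Rabs_left1 by lra.
    pose proof (convex_supporting_line p X (dpp X) q Hconv HX hq (Hdpp X HX)). lra. }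
  assert (Hc : 0 <= c) by apply Rabs_pos.
  assert (Hopt0 : social_optimum (p0 p X XS c) N C xS).
  { apply (foc_social_optimum N C dC _ xS (p XS) HC).
    - apply p0_integrable; auto.
    - apply (proj1 Hopt).
    - apply (optimum_foc N C dC p xS HC Hpc Hpd Hopt).
    - apply p0_le_price; auto.
    - apply p0_ge_price; auto. }
  split; [exact Hopt0|].
  apply efficiency_comparison.
  - apply cont_nonneg_integrable, Hpc.
  - apply p0_integrable; auto.
  - lra.
  - intros q hq. fold X in hq. apply p0_below_p; auto. lra.
  - intros q hq. fold X XS in hq. apply p0_above_p; auto. lra.
  - split; [apply (candidate_welfare_nonneg N C dC p dpm dpp x HC Hp Hx)|].
    apply (proj2 Hopt), (proj1 Hx).
  - apply (optimum_welfare_nonneg _ N C xS); [intros n hn; apply (HC n hn) | exact Hopt0].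
Qed.
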